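(* Let $n>f\ge0$, $b=\frac{f}{n-f}$, let $F_2$ be a $(b,\rho)$-robust summation and $F_1$ an $(f,\nu)$-robust aggregation rule. For inputs $x_1,\dots,x_n\in\mathbb{R}^d$ define, for each $i\in[n]$, $$y_i=x_i-F_2\Big(\big(\tfrac{1}{n-f},\,x_i-x_j\big)_{j\in[n]}\Big),$$ and define the aggregation rule $\tilde F(x_1,\dots,x_n):=F_1(y_1,\dots,y_n)$. Then $\tilde F$ is an $(f,\tilde\nu)$-robust aggregation rule with $$\tilde\nu=\delta(1+\nu),\qquad \delta:=\frac{2\rho f}{n-f}.$$
   Context: $(f,\nu)$-robust aggregation rule: a map $F:\mathbb{R}^{d\times n}\to\mathbb{R}^d$ such that for all $x_1,\dots,x_n\in\mathbb{R}^d$ and every $S\subset[n]$ with $|S|=n-f$, $\|F(x_1,\dots,x_n)-\bar x_S\|^2\le \nu\frac{1}{|S|}\sum_{i\in S}\|x_i-\bar x_S\|^2$, where $\bar x_S=\frac{1}{|S|}\sum_{i\in S}x_i$. $(b,\rho)$-robust summation: a map $F:(\mathbb{R}_+\times\mathbb{R}^d)^n\to\mathbb{R}^d$ such that for all vectors $z_1,\dots,z_n\in\mathbb{R}^d$, all weights $\omega_1,\dots,\omega_n\ge0$ and every $S\subset[n]$ with $\sum_{i\in[n]\setminus S}\omega_i\le b$, one has $\big\|F((\omega_i,z_i)_{i\in[n]})-\sum_{i\in S}\omega_iz_i\big\|^2\le\rho b\sum_{i\in S}\omega_i\|z_i\|^2$. *)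

From mathcomp Require Import all_boot all_order all_algebra.
Set Implicit Arguments. Unset Strict Implicit. Unset Printing Implicit Defensive.
Import Order.TTheory GRing.Theory Num.Theory.
Local Open Scope ring_scope.

Definition sqnorm (R : realFieldType) (d : nat) (v : 'rV[R]_d) : R :=
  \sum_(k < d) (v 0 k) ^+ 2.

Definition avg (R : realFieldType) (d n : nat) (x : 'I_n -> 'rV[R]_d)
  (S : {set 'I_n}) : 'rV[R]_d :=
  (#|S|%:R)^-1 *: \sum_(i in S) x i.

Definition robust_aggregation (R : realFieldType) (d n f : nat) (nu : R)
  (F : ('I_n -> 'rV[R]_d) -> 'rV[R]_d) : Prop :=
  forall (x : 'I_n -> 'rV[R]_d) (S : {set 'I_n}), #|S| = (n - f)%N ->
    sqnorm (F x - avg x S)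
      <= nu * ((#|S|%:R)^-1 * \sum_(i in S) sqnorm (x i - avg x S)).

(* (b,rho)-robust summation F : (R_+ x R^d)^n -> R^d, represented as a
   function of the weight vector w and the vector family z; the property is
   only required for nonnegative weights. *)
Definition robust_summation (R : realFieldType) (d n : nat) (b rho : R)
  (F : ('I_n -> R) -> ('I_n -> 'rV[R]_d) -> 'rV[R]_d) : Prop :=
  forall (w : 'I_n -> R) (z : 'I_n -> 'rV[R]_d) (S : {set 'I_n}),
    (forall i, 0 <= w i) ->
    \sum_(i in ~: S) w i <= b ->
    sqnorm (F w z - \sum_(i in S) w i *: z i)
      <= rho * b * \sum_(i in S) w i * sqnorm (z i).

Definition composed_rule (R : realFieldType) (d n f : nat)
  (F1 : ('I_n -> 'rV[R]_d) -> 'rV[R]_d)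
  (F2 : ('I_n -> R) -> ('I_n -> 'rV[R]_d) -> 'rV[R]_d)
  (x : 'I_n -> 'rV[R]_d) : 'rV[R]_d :=
  F1 (fun i => x i - F2 (fun _ => ((n - f)%:R)^-1) (fun j => x i - x j)).

(* Let x̄ be the mean of the honest inputs x_i (i in S), V their variance and
   m = n - f = |S|.  Since the honest weights 1/m sum x_i - x_j to x_i - x̄,
   robust summation says that y_i = x̄ - e_i with an error obeying
   ||e_i||^2 <= ρ b (1/m) Σ_j ||x_i - x_j||^2; averaging over S and using
   Σ_i Σ_j ||x_i - x_j||^2 = 2 m^2 V gives E := (1/m) Σ_i ||e_i||^2 <= δ V.
   The family y is the family -e translated by x̄, so robust aggregation of
   F1 on y gives ||u||^2 <= ν Var(e) = ν (E - ||ē||^2) for u = F1(y) - ȳ,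
   while F1(y) - x̄ = u - ē.  Expanding ||u + ν ē||^2 >= 0 yields
   ||u - ē||^2 <= (1 + ν) E <= δ (1 + ν) V. *)

From mathcomp Require Import all_boot all_order all_algebra.
From mathcomp Require Import ring lra.
Set Implicit Arguments. Unset Strict Implicit. Unset Printing Implicit Defensive.
Import Order.TTheory GRing.Theory Num.Theory.
Local Open Scope ring_scope.

Section InnerProduct.
Variables (R : realFieldType) (d : nat).
Implicit Types (u v : 'rV[R]_d).

Definition dot u v : R := \sum_(k < d) u 0 k * v 0 k.

Lemma dotC u v : dot u v = dot v u.
Proof. by apply: eq_bigr => k _; rewrite mulrC. Qed.

Lemma dotZl c u v : dot (c *: u) v = c * dot u v.
Proof. by rewrite /dot mulr_sumr; apply: eq_bigr => k _; rewrite !mxE mulrA. Qed.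

Lemma dotZr c u v : dot u (c *: v) = c * dot u v.
Proof. by rewrite dotC dotZl dotC. Qed.

Lemma dot0r v : dot v 0 = 0.
Proof. by rewrite /dot big1 // => k _; rewrite mxE mulr0. Qed.

Lemma dot_sumr I (r : seq I) (P : pred I) (a : I -> 'rV[R]_d) v :
  dot v (\sum_(i <- r | P i) a i) = \sum_(i <- r | P i) dot v (a i).
Proof.
rewrite /dot exchange_big; apply: eq_bigr => k _.
by rewrite summxE mulr_sumr.
Qed.

Lemma dot_suml I (r : seq I) (P : pred I) (a : I -> 'rV[R]_d) v :
  dot (\sum_(i <- r | P i) a i) v = \sum_(i <- r | P i) dot (a i) v.
Proof. by rewrite dotC dot_sumr; apply: eq_bigr => i _; rewrite dotC. Qed.

Lemma sqnormE u : sqnorm u = dot u u.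
Proof. by apply: eq_bigr => k _; rewrite expr2. Qed.

Lemma sqnorm_ge0 u : 0 <= sqnorm u.
Proof. by apply: sumr_ge0 => k _; rewrite sqr_ge0. Qed.

Lemma sqnorm_eq0 u : sqnorm u = 0 -> u = 0.
Proof.
move/eqP; rewrite psumr_eq0 => [/allP u0|k _]; last exact: sqr_ge0.
by apply/rowP => k; rewrite mxE; apply/eqP; rewrite -sqrf_eq0 (implyP (u0 k _)) ?mem_index_enum.
Qed.

Lemma sqnormN u : sqnorm (- u) = sqnorm u.
Proof. by apply: eq_bigr => k _; rewrite mxE sqrrN. Qed.

Lemma sqnormZ c u : sqnorm (c *: u) = c ^+ 2 * sqnorm u.
Proof. by rewrite !sqnormE dotZl dotZr mulrA expr2. Qed.

Lemma sqnormD u v : sqnorm (u + v) = sqnorm u + 2 * dot u v + sqnorm v.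
Proof.
rewrite /sqnorm /dot mulr_sumr -!big_split /=.
by apply: eq_bigr => k _; rewrite mxE; ring.
Qed.

Lemma sqnormB u v : sqnorm (u - v) = sqnorm u - 2 * dot u v + sqnorm v.
Proof.
by rewrite sqnormD sqnormN -scaleN1r dotZr; congr (_ + _); ring.
Qed.

Lemma sqnormB_le_moment (nu c E V : R) u v :
  0 <= V -> 0 <= nu * V -> sqnorm v <= E -> E <= c * V ->
  sqnorm u <= nu * (E - sqnorm v) -> sqnorm (u - v) <= c * (1 + nu) * V.
Proof.
move=> V_ge0 nuV_ge0 vE EV uE.
have u_ge0 := sqnorm_ge0 u; have v_ge0 := sqnorm_ge0 v.
have [nu_gt0|nu_le0] := ltP 0 nu.
  (* ||u + nu v||^2 >= 0 gives nu ||u - v||^2 <= (1 + nu) (||u||^2 + nu ||v||^2). *)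
  have mix := sqnorm_ge0 (u + nu *: v).
  rewrite sqnormD sqnormZ dotZr in mix.
  have : nu * sqnorm (u - v) <= nu * ((1 + nu) * (c * V)).
    rewrite sqnormB; nra.
  by rewrite ler_pM2l // mulrCA mulrA.
have u0 : u = 0 by apply: sqnorm_eq0; apply/le_anti; rewrite u_ge0; nra.
have nuV0 : nu * V = 0 by apply/le_anti; rewrite nuV_ge0; nra.
rewrite u0 sub0r sqnormN mulrDr mulr1 mulrDl -(mulrA c) nuV0 mulr0 addr0.
exact: le_trans vE EV.
Qed.

End InnerProduct.

Section Variance.
Variables (R : realFieldType) (d n : nat) (S : {set 'I_n}).
Hypothesis S_neq0 : (#|S|%:R : R) != 0.
Implicit Types (a : 'I_n -> 'rV[R]_d).

Definition var a : R := #|S|%:R^-1 * \sum_(i in S) sqnorm (a i - avg a S).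

Lemma var_ge0 a : 0 <= var a.
Proof.
rewrite mulr_ge0 ?invr_ge0 ?ler0n //.
by apply: sumr_ge0 => i _; apply: sqnorm_ge0.
Qed.

Lemma sum_avg a : \sum_(i in S) a i = #|S|%:R *: avg a S.
Proof. by rewrite /avg scalerA mulfV // scale1r. Qed.

Lemma avg_subl (c : 'rV[R]_d) a : avg (fun i => c - a i) S = c - avg a S.
Proof.
by rewrite /avg sumrB scalerBr sumr_const -scaler_nat scalerA mulVf // scale1r.
Qed.

Lemma var_subl (c : 'rV[R]_d) a : var (fun i => c - a i) = var a.
Proof.
congr (_ * _); apply: eq_bigr => i _; rewrite avg_subl -sqnormN.
by congr sqnorm; apply/rowP => k; rewrite !mxE; ring.
Qed.

Lemma varE a :
  var a = #|S|%:R^-1 * \sum_(i in S) sqnorm (a i) - sqnorm (avg a S).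
Proof.
rewrite /var (eq_bigr _ (fun i _ => sqnormB (a i) (avg a S))).
rewrite !big_split /= sumrN -mulr_sumr -dot_suml sum_avg dotZl -sqnormE.
by rewrite sumr_const -mulr_natr; field.
Qed.

Lemma sum_sqnorm_pairwise a :
  \sum_(i in S) \sum_(j in S) sqnorm (a i - a j) = 2 * #|S|%:R ^+ 2 * var a.
Proof.
pose b i := a i - avg a S.
have sum_b : \sum_(i in S) b i = 0.
  by rewrite sumrB sum_avg sumr_const -scaler_nat subrr.
transitivity (\sum_(i in S) (#|S|%:R * sqnorm (b i) + \sum_(j in S) sqnorm (b j))).
  apply: eq_bigr => i _.
  rewrite (eq_bigr (fun j => sqnorm (b i) - 2 * dot (b i) (b j) + sqnorm (b j)));
    last by move=> j _; rewrite -sqnormB /b opprB addrA subrK.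
  by rewrite !big_split /= sumr_const sumrN -mulr_sumr -dot_sumr sum_b dot0r -mulr_natl; ring.
by rewrite big_split /= sumr_const -mulr_natr -mulr_sumr /var; field.
Qed.

End Variance.

Lemma robust_aggregation_var_ge0 (R : realFieldType) (d n f : nat) (nu : R)
    (F : ('I_n -> 'rV[R]_d) -> 'rV[R]_d) (x : 'I_n -> 'rV[R]_d) (S : {set 'I_n}) :
  robust_aggregation f nu F -> #|S| = (n - f)%N -> 0 <= nu * var S x.
Proof. by move=> hF hS; apply: le_trans (hF x S hS); apply: sqnorm_ge0. Qed.

Section CompositeRule.
Variables (R : realFieldType) (d n f : nat) (nu rho : R).
Variables (F1 : ('I_n -> 'rV[R]_d) -> 'rV[R]_d)
          (F2 : ('I_n -> R) -> ('I_n -> 'rV[R]_d) -> 'rV[R]_d).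
Hypothesis f_lt_n : (f < n)%N.
Hypothesis F2_robust : robust_summation (f%:R / (n - f)%:R) rho F2.
Hypothesis F1_robust : robust_aggregation f nu F1.
Variables (x : 'I_n -> 'rV[R]_d) (S : {set 'I_n}).
Hypothesis card_S : #|S| = (n - f)%N.

Let m : R := (n - f)%:R.
Let w : 'I_n -> R := fun=> m^-1.
Let y i := x i - F2 w (fun j => x i - x j).
Let e i := avg x S - y i.

Lemma card_S_neq0 : (#|S|%:R : R) != 0.
Proof. by rewrite card_S pnatr_eq0 -lt0n subn_gt0. Qed.

Lemma card_setC_S : #|~: S| = f.
Proof.
apply/eqP; rewrite -(eqn_add2l (n - f)) -card_S cardsC card_ord.
by rewrite card_S subnK // ltnW.
Qed.

Lemma sum_weighted_diff i : \sum_(j in S) w j *: (x i - x j) = x i - avg x S.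
Proof.
rewrite /w -scaler_sumr sumrB sumr_const sum_avg ?card_S_neq0 // -scaler_nat -scalerBr.
by rewrite scalerA /m -card_S mulVf ?card_S_neq0 // scale1r.
Qed.

Lemma sqnorm_sum_err_le i :
  sqnorm (e i) <= rho * (f%:R / m) * \sum_(j in S) w j * sqnorm (x i - x j).
Proof.
have -> : e i = F2 w (fun j => x i - x j) - \sum_(j in S) w j *: (x i - x j).
  by rewrite sum_weighted_diff /e /y; apply/rowP => k; rewrite !mxE; ring.
apply: F2_robust => [j|]; first by rewrite invr_ge0 ler0n.
by rewrite sumr_const card_setC_S mulr_natl.
Qed.

Lemma mean_sqnorm_err_le :
  #|S|%:R^-1 * \sum_(i in S) sqnorm (e i) <= 2 * rho * f%:R / m * var S x.
Proof.
have hS := card_S_neq0.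
apply: le_trans (_ : #|S|%:R^-1 * \sum_(i in S)
    rho * (f%:R / m) * \sum_(j in S) w j * sqnorm (x i - x j) <= _).
  by rewrite ler_wpM2l ?invr_ge0 ?ler0n // ler_sum // => i _; apply: sqnorm_sum_err_le.
rewrite -mulr_sumr; under eq_bigr do rewrite -mulr_sumr.
rewrite -mulr_sumr sum_sqnorm_pairwise // /m -card_S le_eqVlt; apply/predU1l.
by field.
Qed.

Lemma avg_y : avg y S = avg x S - avg e S.
Proof. by rewrite avg_subl ?card_S_neq0 // opprB addrC subrK. Qed.

Lemma composite_rule_robust :
  sqnorm (composed_rule f F1 F2 x - avg x S)
    <= 2 * rho * f%:R / m * (1 + nu) * var S x.
Proof.
have hS := card_S_neq0.
have hu := F1_robust y card_S.
rewrite -/(var S y) -(var_subl hS (avg x S) y) -/e varE // in hu.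
have -> : composed_rule f F1 F2 x - avg x S = (F1 y - avg y S) - avg e S.
  by rewrite avg_y; apply/rowP => k; rewrite !mxE; ring.
apply: (sqnormB_le_moment (var_ge0 S x) (robust_aggregation_var_ge0 x F1_robust card_S)
  _ mean_sqnorm_err_le hu).
have := var_ge0 S e; rewrite varE //; lra.
Qed.

End CompositeRule.

Theorem mainTheorem4 (R : realFieldType) (d n f : nat) (nu rho : R)
  (F1 : ('I_n -> 'rV[R]_d) -> 'rV[R]_d)
  (F2 : ('I_n -> R) -> ('I_n -> 'rV[R]_d) -> 'rV[R]_d) :
  (f < n)%N ->
  robust_summation ((f%:R) / ((n - f)%:R)) rho F2 ->
  robust_aggregation f nu F1 ->
  robust_aggregation f
    (((2 * rho * f%:R) / ((n - f)%:R)) * (1 + nu))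
    (composed_rule f F1 F2).
Proof.
move=> f_lt_n F2_robust F1_robust x S card_S.
exact: composite_rule_robust.
Qed.
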